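(* Consider the networked feedback system described in the context, under the input assumption stated there, and let $d_i(k)=\omega(k,k-i)u(k-i)$ for $i\in\mathcal D$. Then for all integers $k_1,k_2\ge 0$: (1) for $i\in\mathcal D$, $\mathbb E\{d_i(k_1)d_i(k_2)\}=\delta(k_1-k_2)\,\alpha_i^2p_i(1-p_i)\,\mathbb E\{u^2(k_1-i)\}$; (2) for $i_1\ne i_2$ in $\mathcal D$, $\mathbb E\{d_{i_1}(k_1)d_{i_2}(k_2)\}=-\delta(k_1-i_1-k_2+i_2)\,\alpha_{i_1}\alpha_{i_2}p_{i_1}p_{i_2}\,\mathbb E\{u^2(k_1-i_1)\}$.
   Context: Setting: $P$ is a SISO discrete-time LTI plant which is strictly proper (relative degree $\ge1$), $K$ a proper SISO LTI controller. Let $\tau\ge0$ be an integer, $\mathcal D=\{0,\dots,\tau\}$, and $\{\tau_n\}$ an i.i.d. sequence with values in $\mathcal D$, $\Pr\{\tau_n=i\}=p_i$, $\sum_ip_i=1$. With real weights $\alpha_0,\dots,\alpha_\tau$ and Kronecker delta $\delta$, the channel maps $u$ to $u_d(k)=\sum_{i=0}^{\tau}\alpha_i\delta(\tau_{k-i}-i)u(k-i)$. Closed loop: plant input $v-u_d$, plant output $y$, $u=Ky$; signals real, system at rest at $k=0$ (signals vanish for $k<0$). Define $\omega(k,n)=\alpha_{k-n}[\delta(\tau_n-(k-n))-p_{k-n}]$ if $n\le k\le n+\tau$ and $\omega(k,n)=0$ otherwise. Input assumption: $\{\tau_n\}$ is independent of $\{v(k)\}$, and $\{v(k)\}$ is zero-mean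 white noise (independent values) with bounded variances. *)

From HB Require Import structures.
From mathcomp Require Import all_boot all_order all_algebra.
From mathcomp Require Import all_classical all_reals all_analysis.
Set Implicit Arguments. Unset Strict Implicit. Unset Printing Implicit Defensive.
Import Order.TTheory GRing.Theory Num.Theory.
Import numFieldNormedType.Exports.
Local Open Scope classical_set_scope.
Local Open Scope ring_scope.

Definition mutual_indep {d} {T : measurableType d} {R : realType}
  (P : probability T R) {J : eqType} {d'} {V : measurableType d'}
  (X : J -> T -> V) : Prop :=
  forall (F : seq J) (B : J -> set V), uniq F ->
    (forall j, measurable (B j)) ->
    P (\bigcap_(j in [set` F]) (X j @^-1` B j)) =
    (\prod_(j <- F) P (X j @^-1` B j))%E.

Definition indep_processes {d} {T : measurableType d} {R : realType}
  (P : probability T R) {I J : eqType} {d1 d2} {V : measurableType d1}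
  {W : measurableType d2} (X : I -> T -> V) (Y : J -> T -> W) : Prop :=
  forall (F : seq I) (G : seq J) (B : I -> set V) (C : J -> set W),
    (forall i, measurable (B i)) -> (forall j, measurable (C j)) ->
    P ((\bigcap_(i in [set` F]) (X i @^-1` B i)) `&`
       (\bigcap_(j in [set` G]) (Y j @^-1` C j))) =
    (P (\bigcap_(i in [set` F]) (X i @^-1` B i)) *
     P (\bigcap_(j in [set` G]) (Y j @^-1` C j)))%E.

Definition closed_loop {R : realType} {np nk : nat}
  (Ap : 'M[R]_np) (Bp : 'cV[R]_np) (Cp : 'rV[R]_np)
  (Ak : 'M[R]_nk) (Bk : 'cV[R]_nk) (Ck : 'rV[R]_nk) (Dk : R)
  (alpha : nat -> R) (tau : nat) (taus : nat -> nat) (v : nat -> R)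
  (xp : nat -> 'cV[R]_np) (xk : nat -> 'cV[R]_nk) (y u ud : nat -> R) : Prop :=
  xp 0%N = 0 /\ xk 0%N = 0 /\
      (forall k, ud k = \sum_(i < tau.+1)
          (if (i <= k)%N then alpha i * (taus (k - i)%N == i)%:R * u (k - i)%N
           else 0)) /\
      (forall k, xp k.+1 = Ap *m xp k + (v k - ud k) *: Bp) /\
      (forall k, y k = (Cp *m xp k) 0 0) /\
      (forall k, xk k.+1 = Ak *m xk k + y k *: Bk) /\
      (forall k, u k = (Ck *m xk k) 0 0 + Dk * y k).

Definition omega {R : realType} (alpha p : nat -> R) (tau : nat)
  (taus : nat -> nat) (k n : nat) : R :=
  if (n <= k <= n + tau)%N
  then alpha (k - n)%N * ((taus n == (k - n)%N)%:R - p (k - n)%N)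
  else 0.

Definition ushift {R : realType} (u : nat -> R) (i k : nat) : R :=
  if (i <= k)%N then u (k - i)%N else 0.

Definition dnoise {R : realType} (alpha p : nat -> R) (tau : nat)
  (taus : nat -> nat) (u : nat -> R) (i k : nat) : R :=
  if (i <= k)%N then omega alpha p tau taus k (k - i)%N * u (k - i)%N else 0.

From HB Require Import structures.
From mathcomp Require Import all_boot all_order all_algebra.
From mathcomp Require Import all_classical all_reals all_analysis.
From mathcomp Require Import measurable_realfun.
From mathcomp Require Import ring lra zify.
Import Order.TTheory GRing.Theory Num.Theory.
Import numFieldNormedType.Exports.
Import HBNNSimple.
Set Implicit Arguments.
Unset Strict Implicit.
Unset Printing Implicit Defensive.
Local Open Scope classical_set_scope.
Local Open Scope ring_scope.

(* Let H_m be the sigma-algebra generated by the delays tau_0, ..., tau_(m-1)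
   and the whole noise v; [history m] is a pi-system of cylinder events
   generating it.  The loop is driven by v and by the delays already realised,
   so by induction the state and the control u(k) are H_m-measurable and
   square integrable for k <= m, while tau_m is independent of H_m.  Hence
   E[1{tau_m = i} Z] = p_i E[Z] for every integrable H_m-measurable Z
   (uniqueness of measures agreeing on a pi-system, then approximation by
   simple functions).
   Now d_i(k) = alpha_i (1{tau_n = i} - p_i) u(n) with n = k - i.  In a product
   d_i1(k1) d_i2(k2) with n1 < n2, the factor 1{tau_n2 = i2} - p_i2 is centred
   and independent of the rest, so the mean vanishes; when n1 = n2 = n, the
   identity 1{tau_n = i1} 1{tau_n = i2} = delta(i1 - i2) 1{tau_n = i1} leaves
   (delta(i1 - i2) p_i1 - p_i1 p_i2) E[u(n)^2]. *)

Section sigma_measurable.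
Context d (T : measurableType d) (G : set (set T)).
Hypothesis G_measurable : G `<=` measurable.
Local Notation T' := (g_sigma_algebraType G).

Lemma g_sigma_measurable : <<s G >> `<=` measurable.
Proof. by apply: smallest_sub; [exact: sigma_algebra_measurable|]. Qed.

Lemma measurable_fun_g_sigma d' (U : measurableType d') (f : T -> U) :
  measurable_fun (setT : set T') f -> measurable_fun (setT : set T) f.
Proof.
move=> mf _ B mB; have := mf measurableT B mB; rewrite !setTI.
exact: g_sigma_measurable.
Qed.

End sigma_measurable.

Section integral_indep.
Context d (T : measurableType d) (R : realType) (P : probability T R).
Variables (G : set (set T)) (D : set T) (pD : R).
Hypotheses (G_measurable : G `<=` measurable) (GT : G setT).
Hypotheses (G_setI : setI_closed G) (mD : measurable D) (PD : P D = pD%:E).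
Hypothesis indep_G_D : forall E, G E -> P (E `&` D) = (P D * P E)%E.
Local Notation T' := (g_sigma_algebraType G).

Lemma indep_sigma_G E : <<s G >> E -> P (E `&` D) = (pD%:E * P E)%E.
Proof.
move=> GE; have pD_ge0 : 0 <= pD by rewrite -lee_fin -PD measure_ge0.
suff : mrestr P mD E = mscale (NngNum pD_ge0) P E by [].
apply: (g_sigma_algebra_measure_unique G G_measurable (fun _ => setT)
  (fun _ => GT)) => //.
- by apply/seteqP; split => // t _; exists 0%N.
- by move=> A GA; rewrite /= /mrestr indep_G_D // PD.
- by move=> _; rewrite /= /mrestr setTI PD ltry.
Qed.

Lemma integral_indep_nnsfun (f : {nnsfun T' >-> R}) :
  (\int[P]_(t in D) (f t)%:E = pD%:E * \int[P]_t (f t)%:E)%E.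
Proof.
have mf r : measurable (f @^-1` [set r] : set T).
  apply: (g_sigma_measurable G_measurable).
  exact: (measurable_funPTI f (measurable_set1 r)).
have integral_fsum A : measurable A -> (\int[P]_(t in A) (f t)%:E =
    \sum_(r \in range f) r%:E * P (f @^-1` [set r] `&` A))%E.
  move=> mA; under eq_integral do rewrite fimfunE -fsumEFin//.
  rewrite ge0_integral_fsum//; last 2 first.
  - by move=> r; apply/measurable_EFinP/measurable_funM => //;
      exact: measurable_indic.
  - by move=> r t _; rewrite EFinM nnfun_muleindic_ge0.
  apply: eq_fsbigr => r _.
  rewrite (integralZl_indic mA (fun r => f @^-1` [set r])) //.
    by rewrite integral_indic.
  by move=> r0; exact: (preimage_nnfun0 f r0).
rewrite !integral_fsum // ge0_mule_fsumr; last first.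
  move=> r; have [r0|r0] := ltP r 0.
    by rewrite (preimage_nnfun0 f r0) set0I measure0 mule0.
  by rewrite mule_ge0.
apply: eq_fsbigr => r _; rewrite setIT indep_sigma_G; first exact: muleCA.
exact: (measurable_funPTI f (measurable_set1 r)).
Qed.

Lemma integral_indep_ge0 (Y : T -> \bar R) : (forall t, (0 <= Y t)%E) ->
  measurable_fun (setT : set T') Y ->
  (\int[P]_(t in D) Y t = pD%:E * \int[P]_t Y t)%E.
Proof.
move=> Y0 mY.
pose f := nnsfun_approx (measurableT : measurable (setT : set T')) mY.
have mf n : measurable_fun (setT : set T) (fun t => (f n t)%:E).
  exact/measurable_EFinP/(measurable_fun_g_sigma G_measurable)/measurable_funPT.
have nd_f t : {homo (fun n => (f n t)%:E) : a b / (a <= b)%N >-> (a <= b)%E}.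
  by move=> a b ab; rewrite lee_fin; exact/lefP/nd_nnsfun_approx.
have integral_lim A : measurable A ->
    (\int[P]_(t in A) Y t = limn (fun n => \int[P]_(t in A) (f n t)%:E))%E.
  move=> mA; rewrite -monotone_convergence //.
  - apply: eq_integral => t _; apply/esym/cvg_lim => //.
    exact: cvg_nnsfun_approx.
  - by move=> n; exact: measurable_funTS.
  - by move=> n t _; rewrite lee_fin.
rewrite !integral_lim // -limeMl //.
  by congr (limn _); apply/funext => n; exact: integral_indep_nnsfun.
apply: ereal_nondecreasing_is_cvgn => a b ab; apply: ge0_le_integral => //.
  by move=> t _; rewrite lee_fin.
by move=> t _; exact: nd_f.
Qed.

Lemma integral_indep (Y : T -> \bar R) : measurable_fun (setT : set T') Y ->
  P.-integrable setT Y -> (\int[P]_(t in D) Y t = pD%:E * \int[P]_t Y t)%E.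
Proof.
move=> mY iY; rewrite [LHS]integralE [in RHS]integralE.
rewrite !integral_indep_ge0 //; last 2 first.
- exact: measurable_funeneg.
- exact: measurable_funepos.
rewrite -muleBr //; apply: fin_num_adde_defl; rewrite fin_numN.
exact: integrable_neg_fin_num.
Qed.

End integral_indep.

Section square_integrable.
Context d (T : measurableType d) (R : realType) (P : probability T R).
Variable G : set (set T).
Hypothesis G_measurable : G `<=` measurable.
Local Notation T' := (g_sigma_algebraType G).

Definition square_integrable (f : T -> R) :=
  measurable_fun (setT : set T') f /\
  P.-integrable setT (fun t => (f t ^+ 2)%:E).

Lemma measurable_square_integrable f :
  square_integrable f -> measurable_fun setT f.
Proof. by case=> mf _; exact: (measurable_fun_g_sigma G_measurable mf). Qed.

Lemma square_integrable_cst c : square_integrable (fun _ => c).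
Proof.
split; first exact: measurable_cst.
exact: (finite_measure_integrable_cst _ (c ^+ 2) measurableT).
Qed.

Lemma square_integrableD f g : square_integrable f -> square_integrable g ->
  square_integrable (fun t => f t + g t).
Proof.
move=> [mf if2] [mg ig2]; split; first exact: measurable_funD.
apply: (le_integrable measurableT _ _ (integrableD measurableT
  (integrableZl measurableT 2 if2) (integrableZl measurableT 2 ig2))).
  apply/measurable_EFinP/measurable_funX/measurable_funD;
    exact: (measurable_fun_g_sigma G_measurable).
move=> t _ /=; rewrite lee_fin !ger0_norm ?sqr_ge0 //; last first.
  by rewrite addr_ge0 // mulr_ge0 // sqr_ge0.
have := sqr_ge0 (f t - g t); rewrite !expr2; nra.
Qed.

Lemma square_integrableZ c f : square_integrable f ->
  square_integrable (fun t => c * f t).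
Proof.
move=> [mf if2]; split; first exact: measurable_funM.
have := integrableZl measurableT (c ^+ 2) if2.
by apply: eq_integrable => // t _; rewrite -EFinM exprMn.
Qed.

Lemma square_integrable_sum (I : Type) (s : seq I) (F : I -> T -> R) :
  (forall j, square_integrable (F j)) ->
  square_integrable (fun t => \sum_(j <- s) F j t).
Proof.
move=> F_sq; elim: s => [|j s IH].
  by under eq_fun do rewrite big_nil; exact: square_integrable_cst.
under eq_fun do rewrite big_cons; exact: square_integrableD.
Qed.

Lemma square_integrable_boolM (b : T -> bool) f :
  measurable_fun (setT : set T') (fun t => ((b t)%:R : R)) ->
  square_integrable f -> square_integrable (fun t => (b t)%:R * f t).
Proof.
move=> mb [mf if2]; split; first exact: measurable_funM.
apply: (le_integrable measurableT _ _ if2).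
  by apply/measurable_EFinP/measurable_funX/measurable_funM;
    exact: (measurable_fun_g_sigma G_measurable).
move=> t _ /=; rewrite lee_fin.
by case: (b t); rewrite ?mul1r ?mul0r ?expr0n ?normr0.
Qed.

Lemma integrable_mul_square_integrable f g :
  square_integrable f -> square_integrable g ->
  P.-integrable setT (fun t => (f t * g t)%:E).
Proof.
move=> [mf if2] [mg ig2].
apply: (le_integrable measurableT _ _ (integrableD measurableT if2 ig2)).
  apply/measurable_EFinP/measurable_funM;
    exact: (measurable_fun_g_sigma G_measurable).
move=> t _ /=; rewrite lee_fin [X in _ <= X]ger0_norm ?addr_ge0 ?sqr_ge0 //.
rewrite normrM -[f t ^+ 2]real_normK ?num_real //.
rewrite -[g t ^+ 2]real_normK ?num_real //.
have := sqr_ge0 (`|f t| - `|g t|); rewrite !expr2; nra.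
Qed.

End square_integrable.

Lemma integrable_bounded_mul d (T : measurableType d) (R : realType)
    (mu : {measure set T -> \bar R}) (h W : T -> R) (B : R) :
  measurable_fun setT h -> measurable_fun setT W -> (forall t, `|h t| <= B) ->
  mu.-integrable setT (EFin \o W) ->
  mu.-integrable setT (fun t => (h t * W t)%:E).
Proof.
move=> mh mW hB iW.
apply: (le_integrable measurableT _ _ (integrableZl measurableT B iW)).
  by apply/measurable_EFinP; exact: measurable_funM.
move=> t _ /=; rewrite lee_fin normrM [X in _ <= X]normrM.
by apply: ler_wpM2r => //; exact: le_trans (hB t) (ler_norm _).
Qed.

Lemma dnoiseE (R : realType) (alpha p : nat -> R) (tau : nat)
    (taus : nat -> nat) (u : nat -> R) i k : (i <= tau)%N ->
  dnoise alpha p tau taus u i k =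
  if (i <= k)%N then alpha i * ((taus (k - i)%N == i)%:R - p i) * u (k - i)%N
  else 0.
Proof.
move=> itau; rewrite /dnoise /omega; case: ifP => // ik.
by rewrite subKn // leq_subr /= -{1}(subnK ik) leq_add2l itau.
Qed.

Lemma centered_indicator_mul (R : comPzRingType) (x i1 i2 : nat) (p1 p2 : R) :
  ((x == i1)%:R - p1) * ((x == i2)%:R - p2) =
  p1 * p2 + ((i1 == i2)%:R - p2) * (x == i1)%:R - p1 * (x == i2)%:R.
Proof.
case: (eqVneq x i1) => [<-|_]; first by case: (x == i2); rewrite /=; ring.
by case: (x == i2); case: (i1 == i2); rewrite /=; ring.
Qed.

Section history.
Context d (T : measurableType d) (R : realType) (P : probability T R).
Variables (taus : nat -> T -> nat) (v : nat -> T -> R).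
Hypotheses (mtaus : forall n, measurable_fun setT (taus n))
  (mv : forall k, measurable_fun setT (v k)).
Hypotheses (Itaus : mutual_indep P taus) (Itaus_v : indep_processes P taus v).

Definition delay_cylinder m (B : nat -> set nat) : set T :=
  \bigcap_(n in [set` iota 0 m]) (taus n @^-1` B n).

Definition noise_cylinder (F : seq nat) (C : nat -> set R) : set T :=
  \bigcap_(j in [set` F]) (v j @^-1` C j).

Definition history m : set (set T) := [set E | exists B F C,
  (forall j, measurable (C j)) /\ E = delay_cylinder m B `&` noise_cylinder F C].

Let in_iota0 m n : [set` iota 0 m] n <-> (n < m)%N.
Proof. by rewrite /= mem_iota add0n. Qed.

Lemma measurable_delay_cylinder m B : measurable (delay_cylinder m B).
Proof.
apply: bigcap_measurableType => n _.
by rewrite -(setTI (_ @^-1` _)); exact: mtaus.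
Qed.

Lemma measurable_noise_cylinder F C :
  (forall j, measurable (C j)) -> measurable (noise_cylinder F C).
Proof.
move=> mC; apply: bigcap_measurableType => n _.
by rewrite -(setTI (_ @^-1` _)); exact: mv.
Qed.

Lemma history_measurable m : history m `<=` measurable.
Proof.
move=> _ [B [F [C [mC ->]]]]; apply: measurableI.
  exact: measurable_delay_cylinder.
exact: measurable_noise_cylinder.
Qed.

Lemma history_setT m : history m setT.
Proof.
exists (fun _ => setT), [::], (fun _ => setT); split => //.
by apply/seteqP; split => // t _; split => n _.
Qed.

Lemma history_setI m : setI_closed (history m).
Proof.
move=> _ _ [B1 [F1 [C1 [mC1 ->]]]] [B2 [F2 [C2 [mC2 ->]]]].
exists (fun n => B1 n `&` B2 n), (F1 ++ F2),
  (fun j => (if j \in F1 then C1 j else setT) `&`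
            (if j \in F2 then C2 j else setT)).
split; first by move=> j; apply: measurableI; case: ifP.
apply/seteqP; split => t.
- move=> [[H1 V1] [H2 V2]]; split.
    by move=> n Hn; split; [exact: H1|exact: H2].
  by move=> j /= _; split; case: ifPn => jF //; [exact: V1|exact: V2].
- move=> [H V]; split; split.
  + by move=> n Hn; have [] := H n Hn.
  + by move=> j /= jF; have := V j; rewrite /= mem_cat jF => /(_ isT) [].
  + by move=> n Hn; have [] := H n Hn.
  + by move=> j /= jF; have := V j; rewrite /= mem_cat jF orbT => /(_ isT) [].
Qed.

Lemma delay_cylinderS m B i : delay_cylinder m B `&` taus m @^-1` [set i] =
  delay_cylinder m.+1 (fun n => if (n < m)%N then B n else [set i]).
Proof.
apply/seteqP; split => t.
- move=> [Ht Hi] n /in_iota0 Hn /=.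
  case: ifPn => nm; first by apply: Ht; apply/in_iota0.
  by have -> : n = m by apply/eqP; rewrite eqn_leq -ltnS Hn leqNgt.
- move=> H; split.
    move=> n /in_iota0 Hn; have := H n; rewrite Hn; apply.
    by apply/in_iota0; exact: ltn_trans Hn _.
  by have := H m; rewrite ltnn; apply; apply/in_iota0.
Qed.

Lemma history_indep_delay m i E : history m E ->
  P (E `&` taus m @^-1` [set i]) = (P (taus m @^-1` [set i]) * P E)%E.
Proof.
move=> [B [F [C [mC ->]]]].
have P_delay_cylinder k B' : P (delay_cylinder k B') =
    (\prod_(n <- iota 0 k) P (taus n @^-1` B' n))%E.
  by apply: Itaus => //; exact: iota_uniq.
rewrite setIAC delay_cylinderS (@Itaus_v (iota 0 m.+1) F _ C) //.
rewrite (@Itaus_v (iota 0 m) F B C) // -/(delay_cylinder m.+1 _).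
rewrite !P_delay_cylinder -addn1 iotaD big_cat /= big_seq1 add0n ltnn.
rewrite muleAC muleC; congr (_ * (_ * _))%E.
by apply: eq_big_seq => n; rewrite mem_iota add0n => /andP[_ ->].
Qed.

Lemma measurable_delay_history m n (h : nat -> R) : (n < m)%N ->
  measurable_fun (setT : set (g_sigma_algebraType (history m)))
    (fun t => h (taus n t)).
Proof.
move=> nm _ A mA; apply: sub_sigma_algebra.
exists (fun k => if k == n then h @^-1` A else setT), [::], (fun _ => setT).
split => //; apply/seteqP; split => t /=.
- move=> [_ hA]; split; last by move=> k.
  by move=> k _; case: eqP => // ->.
- move=> [H _]; split => //; have := H n; rewrite eqxx; apply.
  exact/in_iota0.
Qed.

Let measurable_delay_fun n (h : nat -> R) :
  measurable_fun setT (fun t => h (taus n t)).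
Proof.
exact: (measurable_fun_g_sigma (@history_measurable n.+1)
  (measurable_delay_history h (ltnSn n))).
Qed.

Lemma square_integrable_noise m j : v j \in Lfun P 2%:E ->
  square_integrable P (history m) (v j).
Proof.
move=> vL2; split; last exact: Lfun2_integrable_sqr.
move=> _ A mA; apply: sub_sigma_algebra.
exists (fun _ => setT), [:: j], (fun _ => A); split => //.
apply/seteqP; split => t /=.
- move=> [_ vA]; split; first by move=> n _.
  by move=> k /=; rewrite inE => /eqP ->.
- by move=> [_ H]; split => //; apply: H; exact: mem_head.
Qed.

Section delay_integral.
Variables (m : nat) (Z : T -> R).
Hypotheses (mZ : measurable_fun (setT : set (g_sigma_algebraType (history m))) Z)
  (iZ : P.-integrable setT (EFin \o Z)).

Lemma integral_delay_indicator i pi : P (taus m @^-1` [set i]) = pi%:E ->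
  (\int[P]_t ((taus m t == i)%:R * Z t)%:E = pi%:E * \int[P]_t (Z t)%:E)%E.
Proof.
move=> Ppi.
have mD : measurable (taus m @^-1` [set i]).
  by rewrite -(setTI (_ @^-1` _)); exact: mtaus.
rewrite -(integral_indep (@history_measurable m) (history_setT m)
  (@history_setI m) mD Ppi (@history_indep_delay m i)) //; last first.
  exact/measurable_EFinP.
rewrite [RHS]integral_mkcond; apply: eq_integral => t _; rewrite patchE.
case: (eqVneq (taus m t) i) => [ti|ne]; first by rewrite mem_set // mul1r.
by rewrite memNset ?mul0r // => /= ti; rewrite ti eqxx in ne.
Qed.

Lemma integral_delay_affine i1 i2 pi1 pi2 c0 c1 c2 :
  P (taus m @^-1` [set i1]) = pi1%:E -> P (taus m @^-1` [set i2]) = pi2%:E ->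
  (\int[P]_t (((c0 + c1 * (taus m t == i1)%:R + c2 * (taus m t == i2)%:R)
      * Z t)%:E) = (c0 + c1 * pi1 + c2 * pi2)%:E * \int[P]_t (Z t)%:E)%E.
Proof.
move=> Ppi1 Ppi2.
have mZT := measurable_fun_g_sigma (@history_measurable m) mZ.
have iZ_indicator i : P.-integrable setT
    (fun t => (((taus m t == i)%:R : R) * Z t)%:E).
  apply: (integrable_bounded_mul (B := 1)) => //.
    exact: (measurable_delay_fun m (fun k => (k == i)%:R)).
  by move=> t; case: (taus m t == i); rewrite ?normr1 ?normr0.
transitivity (\int[P]_t ((c0%:E * (Z t)%:E +
    c1%:E * (((taus m t == i1)%:R : R) * Z t)%:E) +
    c2%:E * (((taus m t == i2)%:R : R) * Z t)%:E))%E.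
  by apply: eq_integral => t _; rewrite -!EFinM -!EFinD; congr (_%:E); ring.
rewrite integralD //; last 2 first.
- by apply: integrableD => //; exact: integrableZl.
- exact: integrableZl.
rewrite integralD //; [|exact: integrableZl|exact: integrableZl].
rewrite !integralZl // (integral_delay_indicator Ppi1).
rewrite (integral_delay_indicator Ppi2).
have := integrable_fin_num measurableT iZ.
case: (\int[P]_t _)%E => // e _.
by rewrite -!EFinM -!EFinD; congr (_%:E); ring.
Qed.

Lemma integral_delay_centered i pi : P (taus m @^-1` [set i]) = pi%:E ->
  (\int[P]_t (((taus m t == i)%:R - pi) * Z t)%:E = 0)%E.
Proof.
move=> Ppi; transitivity (\int[P]_t (((- pi + 1 * (taus m t == i)%:R +
    0 * (taus m t == i)%:R) * Z t)%:E))%E.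
  by apply: eq_integral => t _; congr (_%:E); ring.
by rewrite (integral_delay_affine _ _ _ Ppi Ppi) mul1r mul0r addr0 addNr mul0e.
Qed.

End delay_integral.

Section closed_loop.
Variables (np nk : nat) (Ap : 'M[R]_np) (Bp : 'cV[R]_np) (Cp : 'rV[R]_np)
  (Ak : 'M[R]_nk) (Bk : 'cV[R]_nk) (Ck : 'rV[R]_nk) (Dk : R)
  (tau : nat) (alpha : nat -> R) (xp : nat -> T -> 'cV[R]_np)
  (xk : nat -> T -> 'cV[R]_nk) (y u ud : nat -> T -> R).
Hypothesis loop : forall t, closed_loop Ap Bp Cp Ak Bk Ck Dk alpha tau
  (fun n => taus n t) (fun k => v k t) (fun k => xp k t) (fun k => xk k t)
  (fun k => y k t) (fun k => u k t) (fun k => ud k t).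
Hypothesis v_L2 : forall k, v k \in Lfun P 2%:E.

Let xp0 t : xp 0%N t = 0. Proof. by case: (loop t). Qed.
Let xk0 t : xk 0%N t = 0. Proof. by case: (loop t) => _ []. Qed.
Let udE k t : ud k t = \sum_(i < tau.+1)
  (if (i <= k)%N then alpha i * (taus (k - i)%N t == i)%:R * u (k - i)%N t
   else 0).
Proof. by case: (loop t) => _ [_ []]. Qed.
Let xpS k t : xp k.+1 t = Ap *m xp k t + (v k t - ud k t) *: Bp.
Proof. by case: (loop t) => _ [_ [_ []]]. Qed.
Let yE k t : y k t = (Cp *m xp k t) 0 0.
Proof. by case: (loop t) => _ [_ [_ [_ []]]]. Qed.
Let xkS k t : xk k.+1 t = Ak *m xk k t + y k t *: Bk.
Proof. by case: (loop t) => _ [_ [_ [_ [_ []]]]]. Qed.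
Let uE k t : u k t = (Ck *m xk k t) 0 0 + Dk * y k t.
Proof. by case: (loop t) => _ [_ [_ [_ [_ []]]]]. Qed.

Local Notation L2 m := (square_integrable P (history m)).
Local Notation hm m := (@history_measurable m).

Let state_L2 m k := (forall a, L2 m (fun t => xp k t a 0)) /\
  (forall a, L2 m (fun t => xk k t a 0)).

Let output_L2 m k : state_L2 m k -> L2 m (y k).
Proof.
move=> [xp_L2 _].
have -> : y k = fun t => \sum_(a < np) Cp 0 a * xp k t a 0.
  by apply/funext => t; rewrite yE mxE.
by apply: (square_integrable_sum (hm m)) => a; apply: square_integrableZ.
Qed.

Let control_L2 m k : state_L2 m k -> L2 m (u k).
Proof.
move=> xL2; have y_L2 := output_L2 xL2; case: xL2 => _ xk_L2.
have -> : u k = fun t => \sum_(a < nk) Ck 0 a * xk k t a 0 + Dk * y k t.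
  by apply/funext => t; rewrite uE mxE.
apply: (square_integrableD (hm m)); last exact: square_integrableZ.
by apply: (square_integrable_sum (hm m)) => a; apply: square_integrableZ.
Qed.

Let channel_L2 m k : (k < m)%N -> (forall k', (k' <= k)%N -> L2 m (u k')) ->
  L2 m (ud k).
Proof.
move=> km u_L2.
have -> : ud k = fun t => \sum_(i < tau.+1) (if (i <= k)%N
    then alpha i * ((taus (k - i)%N t == i)%:R * u (k - i)%N t) else 0).
  apply/funext => t; rewrite udE; apply: eq_bigr => i _.
  by case: ifP => //; rewrite mulrA.
apply: (square_integrable_sum (hm m)) => i.
have [ik|_] := boolP (i <= k)%N; last exact: square_integrable_cst.
apply/square_integrableZ/(square_integrable_boolM (hm m)); last first.
  exact/u_L2/leq_subr.
exact: (measurable_delay_history (fun x => (x == i)%:R)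
  (leq_ltn_trans (leq_subr _ _) km)).
Qed.

Let state_L2_le m k : (k <= m)%N -> state_L2 m k.
Proof.
elim/ltn_ind: k => -[_ _|k IH km].
  by split=> a; under eq_fun do rewrite ?xp0 ?xk0 mxE;
    exact: square_integrable_cst.
have u_L2 k' : (k' <= k)%N -> L2 m (u k').
  move=> k'k; apply/control_L2/IH; first by rewrite ltnS.
  exact: leq_trans k'k (ltnW km).
have ud_L2 := channel_L2 km u_L2.
have [xp_L2 xk_L2] := IH k (ltnSn k) (ltnW km).
have y_L2 := output_L2 (conj xp_L2 xk_L2).
have vk_L2 := square_integrable_noise m (v_L2 k).
split=> a.
- have -> : (fun t => xp k.+1 t a 0) = fun t =>
      \sum_(b < np) Ap a b * xp k t b 0 + (Bp a 0 * v k t + - Bp a 0 * ud k t).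
    by apply/funext => t; rewrite xpS !mxE; congr (_ + _); ring.
  apply: (square_integrableD (hm m)).
    by apply: (square_integrable_sum (hm m)) => b; apply: square_integrableZ.
  by apply: (square_integrableD (hm m)); exact: square_integrableZ.
- have -> : (fun t => xk k.+1 t a 0) = fun t =>
      \sum_(b < nk) Ak a b * xk k t b 0 + Bk a 0 * y k t.
    by apply/funext => t; rewrite xkS !mxE; congr (_ + _); ring.
  apply: (square_integrableD (hm m)); last exact: square_integrableZ.
  by apply: (square_integrable_sum (hm m)) => b; apply: square_integrableZ.
Qed.

Lemma square_integrable_control m k : (k <= m)%N -> L2 m (u k).
Proof. by move=> km; exact/control_L2/state_L2_le. Qed.

Variable p : nat -> R.
Hypothesis Pp : forall n i, (i <= tau)%N -> P (taus n @^-1` [set i]) = (p i)%:E.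

Lemma expectation_delay_cross n1 n2 i1 i2 c : (n1 < n2)%N -> (i2 <= tau)%N ->
  (\int[P]_t ((c * ((taus n1 t == i1)%:R - p i1) * u n1 t) *
              (((taus n2 t == i2)%:R - p i2) * u n2 t))%:E = 0)%E.
Proof.
move=> n12 i2t.
pose h t := c * ((taus n1 t == i1)%:R - p i1).
have u1_L2 := square_integrable_control (ltnW n12).
have u2_L2 := square_integrable_control (leqnn n2).
have mh : measurable_fun (setT : set (g_sigma_algebraType (history n2))) h.
  exact: (measurable_delay_history (fun x => c * ((x == i1)%:R - p i1)) n12).
have mZ : measurable_fun (setT : set (g_sigma_algebraType (history n2)))
    (fun t => h t * (u n1 t * u n2 t)).
  by apply/measurable_funM/measurable_funM => //; [case: u1_L2|case: u2_L2].
have iZ : P.-integrable setT (EFin \o (fun t => h t * (u n1 t * u n2 t))).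
  apply: (integrable_bounded_mul (B := `|c| * (1 + `|p i1|))).
  - exact: (measurable_fun_g_sigma (hm n2) mh).
  - apply: measurable_funM.
      exact: (measurable_square_integrable (hm n2) u1_L2).
    exact: (measurable_square_integrable (hm n2) u2_L2).
  - move=> t; rewrite normrM ler_wpM2l // (le_trans (ler_normB _ _)) // lerD2r.
    by case: (_ == _); rewrite ?normr1 ?normr0.
  - exact: (integrable_mul_square_integrable (hm n2)).
rewrite -(integral_delay_centered mZ iZ (Pp n2 i2t)).
by apply: eq_integral => t _; congr (_%:E); rewrite /h; ring.
Qed.

Lemma expectation_delay_sqr n i1 i2 c0 c1 c2 : (i1 <= tau)%N -> (i2 <= tau)%N ->
  (\int[P]_t (((c0 + c1 * (taus n t == i1)%:R + c2 * (taus n t == i2)%:R)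
      * u n t ^+ 2)%:E) =
   (c0 + c1 * p i1 + c2 * p i2)%:E * \int[P]_t (u n t ^+ 2)%:E)%E.
Proof.
move=> i1t i2t; have [mu iu] := square_integrable_control (leqnn n).
by apply: integral_delay_affine => //;
  [exact: measurable_funX|exact: Pp|exact: Pp].
Qed.

Lemma expectation_dnoiseM i1 i2 k1 k2 : (i1 <= tau)%N -> (i2 <= tau)%N ->
  let dn i k t := dnoise alpha p tau (fun n => taus n t) (fun m => u m t) i k in
  ('E_P[fun t => (dn i1 k1 t * dn i2 k2 t)%R] =
   ((k1 + i2 == k2 + i1)%N%:R * alpha i1 * alpha i2 *
    ((i1 == i2)%:R * p i1 - p i1 * p i2))%:E *
   'E_P[fun t => (ushift (fun m => u m t) i1 k1 ^+ 2)%R])%E.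
Proof.
move=> i1t i2t dn; rewrite unlock /ushift /dn.
under eq_integral => t _ do rewrite !dnoiseE //.
have [ik1|ik1] := boolP (i1 <= k1)%N; last first.
  rewrite integral0_eq => [|t _]; last by rewrite mul0r.
  by rewrite integral0_eq ?mule0 // => t _; rewrite expr0n.
have [ik2|ik2] := boolP (i2 <= k2)%N; last first.
  rewrite integral0_eq => [|t _]; last by rewrite mulr0.
  have -> : (k1 + i2 == k2 + i1)%N = false by apply/negbTE/eqP; lia.
  by rewrite !mul0r mul0e.
case: (ltngtP (k1 - i1) (k2 - i2)) => n12.
- have -> : (k1 + i2 == k2 + i1)%N = false by apply/negbTE/eqP; lia.
  rewrite !mul0r mul0e.
  rewrite -(expectation_delay_cross i1 (alpha i1 * alpha i2) n12 i2t).
  by apply: eq_integral => t _; congr (_%:E); ring.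
- have -> : (k1 + i2 == k2 + i1)%N = false by apply/negbTE/eqP; lia.
  rewrite !mul0r mul0e.
  rewrite -(expectation_delay_cross i2 (alpha i1 * alpha i2) n12 i1t).
  by apply: eq_integral => t _; congr (_%:E); ring.
- have -> : (k1 + i2 == k2 + i1)%N = true by apply/eqP; lia.
  rewrite -n12.
  transitivity (\int[P]_t (((alpha i1 * alpha i2 * (p i1 * p i2)) +
      alpha i1 * alpha i2 * ((i1 == i2)%:R - p i2) *
       (taus (k1 - i1)%N t == i1)%:R +
     - (alpha i1 * alpha i2 * p i1) * (taus (k1 - i1)%N t == i2)%:R)
     * u (k1 - i1)%N t ^+ 2)%:E)%E.
    apply: eq_integral => t _; congr (_%:E).
    set x := taus (k1 - i1)%N t; set w := u (k1 - i1)%N t.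
    transitivity (alpha i1 * alpha i2 *
      (((x == i1)%:R - p i1) * ((x == i2)%:R - p i2)) * w ^+ 2); first ring.
    by rewrite centered_indicator_mul; ring.
  by rewrite expectation_delay_sqr // mul1r; congr (_%:E * _)%E; ring.
Qed.

End closed_loop.
End history.

Theorem lemma4 (d : measure_display) (T : measurableType d) (R : realType)
  (P : probability T R) (np nk : nat)
  (Ap : 'M[R]_np) (Bp : 'cV[R]_np) (Cp : 'rV[R]_np)
  (Ak : 'M[R]_nk) (Bk : 'cV[R]_nk) (Ck : 'rV[R]_nk) (Dk : R)
  (tau : nat) (alpha p : nat -> R)
  (taus : nat -> T -> nat) (v : nat -> T -> R)
  (xp : nat -> T -> 'cV[R]_np) (xk : nat -> T -> 'cV[R]_nk)
  (y u ud : nat -> T -> R) :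
  (* the delays take values in D = {0,..,tau}, i.i.d. with law p *)
  (forall n t, (taus n t <= tau)%N) ->
  (forall n, measurable_fun setT (taus n)) ->
  (forall n i, (i <= tau)%N -> P (taus n @^-1` [set i]) = (p i)%:E) ->
  \sum_(i < tau.+1) p i = 1 ->
  mutual_indep P taus ->
  (* v: zero-mean white noise (independent values) with bounded variances *)
  (forall k, measurable_fun setT (v k)) ->
  mutual_indep P v ->
  (forall k, ('E_P[v k] = 0)%E) ->
  (exists M : R, forall k, v k \in Lfun P 2%:E /\ ('V_P[v k] <= M%:E)%E) ->
  (* {tau_n} independent of {v(k)} *)
  indep_processes P taus v ->
  (* closed loop, at rest at k = 0 *)
  (forall t, closed_loop Ap Bp Cp Ak Bk Ck Dk alpha tau
     (fun n => taus n t) (fun k => v k t) (fun k => xp k t) (fun k => xk k t)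
     (fun k => y k t) (fun k => u k t) (fun k => ud k t)) ->
  let dn := fun i k t => dnoise alpha p tau (fun n => taus n t) (fun m => u m t) i k in
  (forall i k1 k2, (i <= tau)%N ->
     ('E_P[fun t => (dn i k1 t * dn i k2 t)%R] =
      ((k1 == k2)%:R * alpha i ^+ 2 * p i * (1 - p i))%:E *
      'E_P[fun t => (ushift (fun m => u m t) i k1 ^+ 2)%R])%E) /\
  (forall i1 i2 k1 k2, (i1 <= tau)%N -> (i2 <= tau)%N -> i1 != i2 ->
     ('E_P[fun t => (dn i1 k1 t * dn i2 k2 t)%R] =
      (- ((k1 + i2 == k2 + i1)%N%:R * alpha i1 * alpha i2 * p i1 * p i2))%:E *
      'E_P[fun t => (ushift (fun m => u m t) i1 k1 ^+ 2)%R])%E).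
Proof.
move=> _ mtaus Pp _ Itaus mv _ _ [M v_bounded] Itaus_v loop dn.
have v_L2 k : v k \in Lfun P 2%:E by case: (v_bounded k).
have dnoiseM := expectation_dnoiseM mtaus mv Itaus Itaus_v loop v_L2 Pp.
split => [i k1 k2 itau | i1 i2 k1 k2 i1tau i2tau ne].
- by rewrite dnoiseM // eqn_add2r eqxx /=; congr (_%:E * _)%E; ring.
- by rewrite dnoiseM // (negbTE ne) /=; congr (_%:E * _)%E; ring.
Qed.
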